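(* Let $n\ge 2$, let $T=\{1,\dots,n\}$ and let $\mathcal T$ be a topology on $T$. Fix an integer $k\ge 1$. Let $A,R\subseteq T\setminus\{n\}$ be disjoint sets such that every point of $A$ is old (at stage $k$), every point of $R$ is new (at stage $k$), and $A\cup R\cup\{n\}$ is a new lower $k$-system of $\mathcal T$. Then at least one of the two sets $A$ or $A\cup\{n\}$ is open in $\mathcal T$.
   Context: For $\alpha\in T$, $\alpha^{*}$ (the covering set of $\alpha$) denotes the smallest open set of $\mathcal T$ containing $\alpha$. For an integer $m\ge 0$, an $m$-system is an open set $P$ of $\mathcal T$ such that $P\setminus\{n\}$ has exactly $m$ points; it is upper if $n\notin P$ and lower if $n\in P$. For fixed $k$, a point $\alpha\neq n$ is called old if $\alpha^{*}$ is an $m$-system for some $m<k$, and new if $\alpha^{*}$ is a $k$-system. A $k$-system is called new if it contains at least one point $p\neq n$ that is not contained in any $m$-system with $m\le k-1$. *)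

From mathcomp Require Import all_boot.
Set Implicit Arguments. Unset Strict Implicit. Unset Printing Implicit Defensive.

(* Points of T = {1,...,n} are encoded as 'I_n.-1.+1 (which has n elements
   when n >= 1): the ordinal i represents the point i+1.  The distinguished
   point n is therefore [ord_max], whose value is n-1. *)
Definition pt (n : nat) := 'I_n.-1.+1.

Definition top_pt (n : nat) : pt n := ord_max.

Definition is_topology (T : finType) (tau : {set {set T}}) : Prop :=
  [/\ set0 \in tau, setT \in tau,
      (forall U V, U \in tau -> V \in tau -> U :|: V \in tau) &
      (forall U V, U \in tau -> V \in tau -> U :&: V \in tau)].

(* covering set alpha^* : the intersection of all open sets containing alpha
   (the smallest open set containing alpha, since T is finite). *)
Definition cover (T : finType) (tau : {set {set T}}) (a : T) : {set T} :=
  \bigcap_(U in tau | a \in U) U.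

Definition msystem (n : nat) (tau : {set {set pt n}}) (m : nat) (P : {set pt n}) : Prop :=
  P \in tau /\ #|P :\ top_pt n| = m.

Definition upper_msystem n tau m (P : {set pt n}) : Prop :=
  msystem tau m P /\ top_pt n \notin P.

Definition lower_msystem n tau m (P : {set pt n}) : Prop :=
  msystem tau m P /\ top_pt n \in P.

Definition old_pt n (tau : {set {set pt n}}) (k : nat) (a : pt n) : Prop :=
  a != top_pt n /\ exists m, m < k /\ msystem tau m (cover tau a).

Definition new_pt n (tau : {set {set pt n}}) (k : nat) (a : pt n) : Prop :=
  a != top_pt n /\ msystem tau k (cover tau a).

Definition new_ksystem n (tau : {set {set pt n}}) (k : nat) (P : {set pt n}) : Prop :=
  msystem tau k P /\
  exists p, [/\ p \in P, p != top_pt n &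
    forall m Q, m <= k - 1 -> msystem tau m Q -> p \notin Q].

From Pilot Require Import Defs.
From mathcomp Require Import all_boot.
Set Implicit Arguments. Unset Strict Implicit. Unset Printing Implicit Defensive.

(* The union U of the covering sets a^* of the points a of A is open and
   contains A.  Each such a^* lies in the open set A :|: R :|: [set n], and it
   contains no new point r: otherwise r^* \subset a^*, although r^* has k
   points besides n and a^* fewer.  Hence A \subset U \subset n |: A, so U is
   A or n |: A. *)

Section FiniteTopology.

Variables (T : finType) (tau : {set {set T}}).
Hypothesis tau_top : is_topology tau.

Lemma mem_cover a : a \in Defs.cover tau a.
Proof. by apply/bigcapP => U /andP[_ ->]. Qed.

Lemma cover_min U a : U \in tau -> a \in U -> Defs.cover tau a \subset U.
Proof. by move=> tauU Ua; apply: bigcap_inf; rewrite tauU Ua. Qed.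

Lemma open_bigcup (I : finType) (P : pred I) (F : I -> {set T}) :
  (forall i, P i -> F i \in tau) -> \bigcup_(i | P i) F i \in tau.
Proof.
case: tau_top => tau0 _ tauU _ tauF.
by elim/big_rec: _ => // i X Pi tauX; apply: tauU; [apply: tauF|].
Qed.

End FiniteTopology.

Lemma subset_setU1_between (T : finType) (x : T) (A U : {set T}) :
  A \subset U -> U \subset x |: A -> U = A \/ U = x |: A.
Proof.
move=> sAU sUxA; have [xU|xNU] := boolP (x \in U).
  by right; apply/eqP; rewrite eqEsubset sUxA subUset sub1set xU.
left; apply/eqP; rewrite eqEsubset sAU andbT; apply/subsetP => y Uy.
by move: (subsetP sUxA y Uy); rewrite !inE => /predU1P[yx|//]; rewrite -yx Uy in xNU.
Qed.

Section OldAndNewPoints.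

Variables (n k : nat) (tau : {set {set pt n}}).

Lemma old_cover_open a : old_pt tau k a -> Defs.cover tau a \in tau.
Proof. by case=> _ [m [_ []]]. Qed.

Lemma new_notin_old_cover a r :
  old_pt tau k a -> new_pt tau k r -> r \notin Defs.cover tau a.
Proof.
case=> _ [m [ltmk [tau_a card_a]]] [_ [_ card_r]]; apply/negP => ra.
have : #|Defs.cover tau r :\ top_pt n| <= #|Defs.cover tau a :\ top_pt n|.
  by apply/subset_leq_card/setSD/cover_min.
by rewrite card_r card_a leqNgt ltmk.
Qed.

End OldAndNewPoints.

Theorem lemma3 (n : nat) (hn : 2 <= n) (tau : {set {set pt n}})
  (htop : is_topology tau) (k : nat) (hk : 1 <= k) (A R : {set pt n})
  (hA : top_pt n \notin A) (hR : top_pt n \notin R) (hAR : [disjoint A & R])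
  (hold : forall a, a \in A -> old_pt tau k a)
  (hnew : forall r, r \in R -> new_pt tau k r)
  (hsys : new_ksystem tau k (A :|: R :|: [set top_pt n]) /\
          lower_msystem tau k (A :|: R :|: [set top_pt n])) :
  A \in tau \/ top_pt n |: A \in tau.
Proof.
have [_ [[tauP _] _]] := hsys.
set U := \bigcup_(a in A) Defs.cover tau a.
have tauU : U \in tau.
  by apply: open_bigcup => // a Aa; apply/old_cover_open/hold.
have sAU : A \subset U.
  by apply/subsetP => a Aa; apply/bigcupP; exists a; rewrite ?mem_cover.
have sUnA : U \subset top_pt n |: A.
  apply/bigcupsP => a Aa; apply/subsetP => x ax.
  have : x \in A :|: R :|: [set top_pt n].
    by apply: subsetP ax; apply: cover_min tauP _; rewrite !inE Aa.
  rewrite !inE => /orP[/orP[->|Rx]|->]; rewrite ?orbT //.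
  by move: ax; rewrite (negbTE (new_notin_old_cover (hold a Aa) (hnew x Rx))).
by case: (subset_setU1_between sAU sUnA) => <-; [left | right].
Qed.
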